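(* Let $N\ge 2$ and let $\mathcal{A}$ be an $M\times N$ circular Florentine rectangle over $\mathbb{Z}_N$ with rows $\pi_0,\dots,\pi_{M-1}$. For each $i$ let $\pi_i^{-1}$ denote the inverse permutation of $\pi_i$. Then each $\pi_i^{-1}$ is a permutation of $\mathbb{Z}_N$, and for all $0\le i\neq r\le M-1$ the map $x\mapsto \pi_i^{-1}(x)-\pi_r^{-1}(x) \pmod N$ is a permutation of $\mathbb{Z}_N$.
   Context: An $M\times N$ circular Florentine rectangle (CFR) over $\mathbb{Z}_N$ is an $M\times N$ array whose rows, viewed as maps $\pi_i:\mathbb{Z}_N\to\mathbb{Z}_N$ ($\pi_i(x)$ is the entry in row $i$, column $x$), are permutations of $\mathbb{Z}_N$, and such that for every $m\in\mathbb{Z}_N\setminus\{0\}$ and all $0\le i,j\le M-1$, $x,y\in\mathbb{Z}_N$, one has $(\pi_i(x),\pi_i(x+m))=(\pi_j(y),\pi_j(y+m))$ (indices modulo $N$) if and only if $i=j$ and $x=y$. *)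

From mathcomp Require Import all_boot all_order all_algebra all_fingroup.
Set Implicit Arguments. Unset Strict Implicit. Unset Printing Implicit Defensive.
Import GRing.Theory.
Local Open Scope ring_scope.

(* Z_N is represented by 'Z_N (valid for N >= 2, which is assumed).
   An M x N array with rows that are permutations of Z_N is a family
   A : 'I_M -> {perm 'Z_N}; row i is the permutation A i (column x |-> A i x). *)

Definition is_CFR (M N : nat) (A : 'I_M -> {perm 'Z_N}) : Prop :=
  forall (m : 'Z_N), m != 0 ->
  forall (i j : 'I_M) (x y : 'Z_N),
    ((A i x, A i (x + m)) = (A j y, A j (y + m))) <-> (i = j /\ x = y).

From mathcomp Require Import all_boot all_order all_algebra all_fingroup.
Import GRing.Theory.
Local Open Scope ring_scope.

Lemma inv_perm_subr_inj (G : finZmodType) (f g : {perm G}) :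
  (forall m a b, m != 0 -> f a = g b -> f (a + m) = g (b + m) -> False) ->
  injective (fun x => (f^-1)%g x - (g^-1)%g x).
Proof.
move=> no_common_shift x y /= eq_diff; apply/eqP; apply: contraT => neq_xy.
(* x and y are reached from f^-1 x and g^-1 x by the same shift m, so f and g
   coincide on a pair of points at distance m. *)
set m := (f^-1)%g y - (f^-1)%g x.
have m_neq0 : m != 0.
  by rewrite subr_eq0; apply: contraNneq neq_xy => /perm_inj ->.
have m_g : m = (g^-1)%g y - (g^-1)%g x.
  rewrite /m -[(f^-1)%g y](subrK ((g^-1)%g y)) -eq_diff.
  by rewrite addrAC [_ - _ - _]addrAC subrr add0r addrC.
elim: (no_common_shift m ((f^-1)%g x) ((g^-1)%g x) m_neq0).
  by rewrite !permKV.
by rewrite {1}/m m_g !(addrC _ (_ - _)) !subrK !permKV.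
Qed.

Lemma CFR_common_shift_eq (M N : nat) (A : 'I_M -> {perm 'Z_N}) (i r : 'I_M)
    (m a b : 'Z_N) :
  is_CFR A -> m != 0 -> A i a = A r b -> A i (a + m) = A r (b + m) -> i = r.
Proof.
move=> CFR_A m_neq0 eq_a eq_am.
by have [] := (CFR_A m m_neq0 i r a b).1 (congr2 pair eq_a eq_am).
Qed.

Theorem lemma4 (M N : nat) (hN : (1 < N)%N) (A : 'I_M -> {perm 'Z_N}) :
  is_CFR A ->
  (forall i : 'I_M, bijective (fun x : 'Z_N => ((A i)^-1)%g x)) /\
  (forall i r : 'I_M, i != r ->
     bijective (fun x : 'Z_N => ((A i)^-1)%g x - ((A r)^-1)%g x)).
Proof.
move=> CFR_A; split=> [i | i r neq_ir].
  exact: (Bijective (permKV (A i)) (permK (A i))).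
apply: injF_bij; apply: inv_perm_subr_inj => m a b m_neq0 eq_a eq_am.
by move/eqP: neq_ir; apply; apply: CFR_common_shift_eq eq_am.
Qed.
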